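(* Let $(\mathfrak g,[\cdot,\cdot],\delta,n)$ be an almost NL bialgebra in which $n$ is a Nijenhuis operator, and assume ${}^tn$ is $\mathrm{ad}^*$-equivariant on $(\mathfrak g^*,[\cdot,\cdot]_{\mathfrak g^*})$, i.e. $\delta(\xi)(\eta_1,{}^tn\eta_2)=\delta(n\xi)(\eta_1,\eta_2)$ for all $\xi\in\mathfrak g$, $\eta_1,\eta_2\in\mathfrak g^*$. Then for all integers $i,j\ge0$: $[\cdot,\cdot]_{n^i}$ is a Lie bracket on $\mathfrak g$; $[\cdot,\cdot]^{({}^tn)^j}$ is a Lie bracket on $\mathfrak g^*$ with $\langle[\eta_1,\eta_2]^{({}^tn)^j},\xi\rangle=\delta_{({}^tn)^j}(\xi)(\eta_1,\eta_2)$; and $\delta_{({}^tn)^j}$ is a 1-cocycle for $[\cdot,\cdot]_{n^i}$. Thus $(\mathfrak g,[\cdot,\cdot]_{n^i},\delta^{n^i}_{({}^tn)^j})$, where $\delta^{n^i}_{({}^tn)^j}$ denotes $\delta_{({}^tn)^j}$ regarded as a cochain for $[\cdot,\cdot]_{n^i}$, is a Lie bialgebra for all $i,j\ge0$; moreover the brackets $[\cdot,\cdot]_{n^i}$ ($i\ge0$) are pairwise compatible, as are the brackets $[\cdot,\cdot]^{({}^tn)^j}$ ($j\ge0$) (any linear combination of two of them is again a Lie bracket).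
   Context: $(\mathfrak g,[\cdot,\cdot])$ is a finite-dimensional real Lie algebra; $\langle\mathrm{ad}^*_\xi\eta,\zeta\rangle=-\langle\eta,[\xi,\zeta]\rangle$. Elements of $\wedge^2\mathfrak g$ are skew-symmetric bilinear forms on $\mathfrak g^*$; for linear $\phi:\mathfrak g^*\to\mathfrak g^*$, $(\iota_\phi P)(\eta_1,\eta_2)=P(\phi\eta_1,\eta_2)+P(\eta_1,\phi\eta_2)$; $\mathrm{ad}^{(2)}_\xi=\iota_{\mathrm{ad}^*_\xi}$. A linear $\delta:\mathfrak g\to\wedge^2\mathfrak g$ is a 1-cocycle for $[\cdot,\cdot]$ if $\mathrm{ad}^{(2)}_{\xi_1}\delta(\xi_2)-\mathrm{ad}^{(2)}_{\xi_2}\delta(\xi_1)-\delta([\xi_1,\xi_2])=0$; a Lie bialgebra $(\mathfrak g,[\cdot,\cdot],\delta)$ has such $\delta$ with dual bracket $\langle[\eta_1,\eta_2]_{\mathfrak g^*},\xi\rangle=\delta(\xi)(\eta_1,\eta_2)$ a Lie bracket. ${}^tn$ is the transpose of $n$. For $m:\mathfrak g\to\mathfrak g$ linear, $[\xi_1,\xi_2]_m=[m\xi_1,\xi_2]+[\xi_1,m\xi_2]-m[\xi_1,\xi_2]$ (so $[\cdot,\cdot]_{n^0}=[\cdot,\cdot]$); $m$ is Nijenhuis if $m[\xi_1,\xi_2]_m=[m\xi_1,m\xi_2]$. For $j\ge0$, $[\eta_1,\eta_2]^{({}^tn)^j}=[({}^tn)^j\eta_1,\eta_2]_{\mathfrak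 g^*}+[\eta_1,({}^tn)^j\eta_2]_{\mathfrak g^*}-({}^tn)^j[\eta_1,\eta_2]_{\mathfrak g^*}$ and $\delta_{({}^tn)^j}(\xi)=\iota_{({}^tn)^j}\delta(\xi)-\delta(n^j\xi)$. A 1-cocycle for $[\cdot,\cdot]_{n^i}$ is a linear $\delta'$ with $\iota_{A^i_{\xi_1}}\delta'(\xi_2)-\iota_{A^i_{\xi_2}}\delta'(\xi_1)-\delta'([\xi_1,\xi_2]_{n^i})=0$, where $A^i_\xi=[({}^tn)^i,\mathrm{ad}^*_\xi]+\mathrm{ad}^*_{n^i\xi}$. An almost NL bialgebra $(\mathfrak g,[\cdot,\cdot],\delta,n)$ is a Lie bialgebra with linear $n$ such that $[\cdot,\cdot]_n$ is a Lie bracket, $\delta$ is a 1-cocycle for $[\cdot,\cdot]_n$, and $[\cdot,\cdot]^{{}^tn}$ is a Lie bracket on $\mathfrak g^*$. *)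

(* g = R^d (row vectors), g^* identified with R^d via the
   standard pairing; linear maps g -> g are d x d matrices acting on the right. *)
From HB Require Import structures.
From mathcomp Require Import all_boot all_order all_algebra.
From mathcomp Require Import reals.
Set Implicit Arguments. Unset Strict Implicit. Unset Printing Implicit Defensive.
Import Order.TTheory GRing.Theory Num.Theory.
Local Open Scope ring_scope.

Section Defs.
Variables (R : realType) (d : nat).
Local Notation V := 'rV[R]_d.

Definition pair (eta xi : V) : R := \sum_(k < d) eta 0 k * xi 0 k.
Definition ev (k : 'I_d) : V := delta_mx 0 k.

Definition is_bilinear (b : V -> V -> V) : Prop :=
  (forall (a : R) x y z, b (a *: x + y) z = a *: b x z + b y z) /\
  (forall (a : R) x y z, b z (a *: x + y) = a *: b z x + b z y).

Definition is_lie_bracket (b : V -> V -> V) : Prop :=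
  is_bilinear b /\ (forall x, b x x = 0) /\
  (forall x y z, b x (b y z) + b y (b z x) + b z (b x y) = 0).

(* elements of wedge^2 g : skew-symmetric bilinear forms on g^* *)
Definition is_wedge2 (P : V -> V -> R) : Prop :=
  (forall (a : R) x y z, P (a *: x + y) z = a * P x z + P y z) /\
  (forall (a : R) x y z, P z (a *: x + y) = a * P z x + P z y) /\
  (forall x y, P x y = - P y x).

Definition is_cochain (dl : V -> V -> V -> R) : Prop :=
  (forall xi, is_wedge2 (dl xi)) /\
  (forall (a : R) x y e1 e2, dl (a *: x + y) e1 e2 = a * dl x e1 e2 + dl y e1 e2).

(* ad^*_xi eta, characterised by <ad^*_xi eta, zeta> = - <eta, [xi, zeta]> *)
Definition adstar (br : V -> V -> V) (xi eta : V) : V :=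
  \row_k (- pair eta (br xi (ev k))).

Definition iota (phi : V -> V) (P : V -> V -> R) : V -> V -> R :=
  fun e1 e2 => P (phi e1) e2 + P e1 (phi e2).

(* dual bracket: <[e1,e2]_{g^*}, xi> = dl(xi)(e1,e2) *)
Definition dualbr (dl : V -> V -> V -> R) (e1 e2 : V) : V :=
  \row_k dl (ev k) e1 e2.

Definition deform (b : V -> V -> V) (m : V -> V) : V -> V -> V :=
  fun x y => b (m x) y + b x (m y) - m (b x y).

Definition nmap (N : 'M[R]_d) (i : nat) (xi : V) : V := xi *m (N ^+ i).
Definition tnmap (N : 'M[R]_d) (j : nat) (eta : V) : V := eta *m (N^T ^+ j).

Definition Amap (br : V -> V -> V) (N : 'M[R]_d) (i : nat) (xi : V) : V -> V :=
  fun eta => tnmap N i (adstar br xi eta) - adstar br xi (tnmap N i eta)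
             + adstar br (nmap N i xi) eta.

(* 1-cocycle condition, relative to a family of operators adop (ad^* or A^i)
   and a bracket b *)
Definition cocycle (adop : V -> V -> V) (b : V -> V -> V)
  (dl : V -> V -> V -> R) : Prop :=
  forall x y e1 e2,
    iota (adop x) (dl y) e1 e2 - iota (adop y) (dl x) e1 e2 - dl (b x y) e1 e2 = 0.

Definition is_lie_bialgebra (br : V -> V -> V) (dl : V -> V -> V -> R) : Prop :=
  is_lie_bracket br /\ is_cochain dl /\ cocycle (adstar br) br dl /\
  is_lie_bracket (dualbr dl).

Definition delta_tn (dl : V -> V -> V -> R) (N : 'M[R]_d) (j : nat) :
  V -> V -> V -> R :=
  fun xi e1 e2 => iota (tnmap N j) (dl xi) e1 e2 - dl (nmap N j xi) e1 e2.

Definition is_nijenhuis (br : V -> V -> V) (N : 'M[R]_d) : Prop :=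
  forall x y, nmap N 1 (deform br (nmap N 1) x y) = br (nmap N 1 x) (nmap N 1 y).

Definition is_almost_NL (br : V -> V -> V) (dl : V -> V -> V -> R)
  (N : 'M[R]_d) : Prop :=
  is_lie_bialgebra br dl /\
  is_lie_bracket (deform br (nmap N 1)) /\
  cocycle (Amap br N 1) (deform br (nmap N 1)) dl /\
  is_lie_bracket (deform (dualbr dl) (tnmap N 1)).

End Defs.

(* Since [n] is Nijenhuis, every torsion [[n^p x, n^q y] - n^p [x, n^q y]
   - n^q [n^p x, y] + n^(p+q) [x, y]] vanishes, and the torsion is bilinear in
   the two operators; so [[.,.]] deformed by any linear combination of powers of
   [n] is a Lie bracket.  Equivariance of [ᵗn] makes the deformed dual brackets
   just [[.,.]_{g^*}] followed by [(ᵗn)^j], and [δ_{(ᵗn)^j}(ξ) = δ(n^j ξ)].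
   For the cocycle property, an explicit formula for the Chevalley–Eilenberg
   differential of a cochain with respect to a deformed bracket reduces
   everything to the cocycle conditions for [ξ ↦ δ(n^m ξ)] with respect to
   [[.,.]].  These hold for [m = 0] (Lie bialgebra) and [m = 1] (almost NL),
   and pass from [m] and [m + 1] to [m + 2] because [[ᵗn, ad^*_x] (ᵗn a) =
   [ᵗn, ad^*_{n x}] a], again by the vanishing of the torsion. *)

From Pilot Require Import Defs.
From mathcomp Require Import all_boot all_order all_algebra.
From mathcomp Require Import reals boolp.
From mathcomp Require Import ring lra.
Import GRing.Theory.
Local Open Scope ring_scope.
Set Implicit Arguments. Unset Strict Implicit.

Section NLBialgebra.
Variables (R : realType) (d : nat).
Local Notation V := 'rV[R]_d.
Local Notation M := 'M[R]_d.
Local Notation ev := (@ev R d).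

Lemma trmxX (A : M) k : (A ^+ k)^T = A^T ^+ k.
Proof.
elim: k => [|k IHk]; first by rewrite !expr0 trmx1.
by rewrite exprS exprSr -mulmxE trmx_mul IHk mulmxE.
Qed.

Section LinearMap.
Variables (W : lmodType R) (f : V -> W).
Hypothesis f_lin : forall a x y, f (a *: x + y) = a *: f x + f y.

Lemma linD x y : f (x + y) = f x + f y.
Proof. by have := f_lin 1 x y; rewrite !scale1r. Qed.

Lemma lin0 : f 0 = 0.
Proof. by apply/(addrI (f 0)); rewrite -linD !addr0. Qed.

Lemma linZ a x : f (a *: x) = a *: f x.
Proof. by rewrite -[a *: x]addr0 f_lin lin0 addr0. Qed.

Lemma linN x : f (- x) = - f x.
Proof. by rewrite -[- x]scaleN1r linZ scaleN1r. Qed.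

Lemma linB x y : f (x - y) = f x - f y.
Proof. by rewrite linD linN. Qed.

Lemma lin_sum (I : finType) (c : I -> R) (v : I -> V) :
  f (\sum_i c i *: v i) = \sum_i c i *: f (v i).
Proof. by elim/big_rec2: _ => [|i y1 y2 _ <-]; rewrite ?lin0 ?f_lin. Qed.

End LinearMap.

Section ScalarLinearMap.
Variable f : V -> R.
Hypothesis f_lin : forall a x y, f (a *: x + y) = a * f x + f y.
Let f_lin_regular : forall a x y, (f : V -> R^o) (a *: x + y) = a *: (f x : R^o) + f y
  := f_lin.

Lemma slinD x y : f (x + y) = f x + f y. Proof. exact: (@linD R^o f f_lin_regular). Qed.
Lemma slin0 : f 0 = 0. Proof. exact: (@lin0 R^o f f_lin_regular). Qed.
Lemma slinN x : f (- x) = - f x. Proof. exact: (@linN R^o f f_lin_regular). Qed.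
Lemma slinB x y : f (x - y) = f x - f y. Proof. exact: (@linB R^o f f_lin_regular). Qed.
Lemma slin_sum (I : finType) (c : I -> R) (v : I -> V) :
  f (\sum_i c i *: v i) = \sum_i c i * f (v i).
Proof. exact: (@lin_sum R^o f f_lin_regular). Qed.

End ScalarLinearMap.

(* Unlike [mxE], these do not unfold matrix products, which [ring] then treats
   as atoms. *)
Lemma entryD (u v : V) k : (u + v) 0 k = u 0 k + v 0 k. Proof. by rewrite mxE. Qed.
Lemma entryN (u : V) k : (- u) 0 k = - u 0 k. Proof. by rewrite mxE. Qed.
Lemma entryZ a (u : V) k : (a *: u) 0 k = a * u 0 k. Proof. by rewrite mxE. Qed.
Lemma entry0 k : (0 : V) 0 k = 0. Proof. by rewrite mxE. Qed.

Lemma pair_linr (e : V) a x y : pair e (a *: x + y) = a * pair e x + pair e y.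
Proof.
by rewrite /pair mulr_sumr -big_split; apply: eq_bigr => k _; rewrite !mxE /=; ring.
Qed.

Lemma pair_ev (v : V) k : pair v (ev k) = v 0 k.
Proof.
rewrite /pair (bigD1 k) //= big1 ?addr0; first by rewrite mxE !eqxx mulr1.
by move=> l /negbTE lk; rewrite mxE lk andbF mulr0.
Qed.

Lemma pair_trmx (e z : V) (A : M) : pair (e *m A^T) z = pair e (z *m A).
Proof.
rewrite /pair.
under eq_bigr do rewrite mxE big_distrl.
under [RHS]eq_bigr do rewrite mxE big_distrr.
rewrite exchange_big; apply: eq_bigr => i _; apply: eq_bigr => j _.
by rewrite mxE /= -mulrA [A j i * _]mulrC.
Qed.

Lemma mulmx_entry (v : V) (A : M) k : (v *m A) 0 k = pair v (ev k *m A^T).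
Proof. by rewrite -pair_trmx trmxK pair_ev. Qed.

Section Bilinear.
Variable b : V -> V -> V.
Hypothesis b_bilin : is_bilinear b.
Let b_linl z : forall a x y, b (a *: x + y) z = a *: b x z + b y z :=
  fun a x y => b_bilin.1 a x y z.
Let b_linr z : forall a x y, b z (a *: x + y) = a *: b z x + b z y :=
  fun a x y => b_bilin.2 a x y z.

Lemma bilinDl x y z : b (x + y) z = b x z + b y z. Proof. exact: (linD (b_linl z)). Qed.
Lemma bilinBl x y z : b (x - y) z = b x z - b y z. Proof. exact: (linB (b_linl z)). Qed.
Lemma bilinNl x z : b (- x) z = - b x z. Proof. exact: (linN (b_linl z)). Qed.
Lemma bilinZl a x z : b (a *: x) z = a *: b x z. Proof. exact: (linZ (b_linl z)). Qed.
Lemma bilin0l z : b 0 z = 0. Proof. exact: (lin0 (b_linl z)). Qed.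
Lemma bilinDr x y z : b z (x + y) = b z x + b z y. Proof. exact: (linD (b_linr z)). Qed.
Lemma bilinBr x y z : b z (x - y) = b z x - b z y. Proof. exact: (linB (b_linr z)). Qed.
Lemma bilinNr x z : b z (- x) = - b z x. Proof. exact: (linN (b_linr z)). Qed.
Lemma bilinZr a x z : b z (a *: x) = a *: b z x. Proof. exact: (linZ (b_linr z)). Qed.
Lemma bilin0r z : b z 0 = 0. Proof. exact: (lin0 (b_linr z)). Qed.

Lemma pair_adstar x e z : pair (adstar b x e) z = - pair e (b x z).
Proof.
rewrite {2}(row_sum_delta z) (lin_sum (b_linr x)) (slin_sum (pair_linr e)) -sumrN.
by apply: eq_bigr => k _; rewrite /pair mxE mulNr mulrC.
Qed.

End Bilinear.

Ltac bilin_expand b_bilin := rewrite ?(mulmxDl, mulmxBl, mulNmx, mul0mx,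
  bilinDl b_bilin, bilinBl b_bilin, bilinNl b_bilin, bilin0l b_bilin,
  bilinDr b_bilin, bilinBr b_bilin, bilinNr b_bilin, bilin0r b_bilin,
  addr0, add0r, subr0, oppr0).

Ltac entrywise := apply/rowP => ?; rewrite ?(entryD, entryN, entryZ, entry0).

Lemma lie_skew (b : V -> V -> V) : is_lie_bracket b -> forall x y, b x y = - b y x.
Proof.
move=> [b_bilin [b_alt _]] x y; apply/eqP; rewrite -addr_eq0.
by have := b_alt (x + y); bilin_expand b_bilin; rewrite !b_alt add0r addr0 => ->.
Qed.

(* With matrices acting on the right, [x *m A] is [A x], so this is
   [[Ax, By] - A[x, By] - B[Ax, y] + AB[x, y]]; for [A = B = N] it is the
   Nijenhuis torsion of [N]. *)
Definition torsion (b : V -> V -> V) (A B : M) (x y : V) : V :=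
  b (x *m A) (y *m B) - b x (y *m B) *m A - b (x *m A) y *m B + b x y *m B *m A.

Definition jacobiator (b : V -> V -> V) (x y z : V) : V :=
  b x (b y z) + b y (b z x) + b z (b x y).

Section Torsion.
Variable b : V -> V -> V.
Hypothesis b_bilin : is_bilinear b.

Lemma torsion1l B x y : torsion b 1 B x y = 0.
Proof. by rewrite /torsion !mulmx1 subrr sub0r addrC subrr. Qed.

Lemma torsionMl (A B C : M) x y :
  torsion b (A * B) C x y = torsion b B C (x *m A) y + torsion b A C x y *m B.
Proof. by rewrite /torsion -!mulmxE !mulmxA; bilin_expand b_bilin; entrywise; ring. Qed.

Lemma torsion_lincombl a c (A1 A2 B : M) x y :
  torsion b (a *: A1 + c *: A2) B x y
  = a *: torsion b A1 B x y + c *: torsion b A2 B x y.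
Proof.
rewrite /torsion !mulmxDr -!scalemxAr; bilin_expand b_bilin.
rewrite ?(bilinZl b_bilin, bilinZr b_bilin) -?scalemxAl; entrywise; ring.
Qed.

Lemma torsion_lincombr a c (A B1 B2 : M) x y :
  torsion b A (a *: B1 + c *: B2) x y
  = a *: torsion b A B1 x y + c *: torsion b A B2 x y.
Proof.
rewrite /torsion !mulmxDr -!scalemxAr; bilin_expand b_bilin.
rewrite ?(bilinZl b_bilin, bilinZr b_bilin) -?scalemxAl; entrywise; ring.
Qed.

Lemma deform_bilinear (A : M) : is_bilinear (deform b (fun x => x *m A)).
Proof.
split=> a x y z; rewrite /deform mulmxDl -scalemxAl; bilin_expand b_bilin;
  rewrite ?(bilinZl b_bilin, bilinZr b_bilin) -?scalemxAl; entrywise; ring.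
Qed.

Lemma jacobiator_deform (A : M) x y z :
  jacobiator (deform b (fun v => v *m A)) x y z =
    jacobiator b (x *m A) (y *m A) z + jacobiator b (x *m A) y (z *m A)
  + jacobiator b x (y *m A) (z *m A)
  - (jacobiator b (x *m A) y z + jacobiator b x (y *m A) z
     + jacobiator b x y (z *m A)) *m A
  + jacobiator b x y z *m A *m A
  - (b x (torsion b A A y z) + b y (torsion b A A z x) + b z (torsion b A A x y)
     + torsion b A A x (b y z) + torsion b A A y (b z x)
     + torsion b A A z (b x y)).
Proof.
by rewrite /jacobiator /deform /torsion; bilin_expand b_bilin; entrywise; ring.
Qed.

End Torsion.

Lemma torsion_swap (b : V -> V -> V) (A B : M) x y :
  is_lie_bracket b -> A * B = B * A -> torsion b A B x y = - torsion b B A y x.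
Proof.
move=> b_lie AB; have skew := lie_skew b_lie.
have BA v : v *m A *m B = v *m B *m A by rewrite -!mulmxA !mulmxE AB.
rewrite /torsion BA (skew y x) (skew y (x *m A)) (skew (y *m B) x).
rewrite (skew (y *m B) (x *m A)) ?mulNmx; entrywise; ring.
Qed.

Lemma torsionX (b : V -> V -> V) (A : M) :
  is_lie_bracket b -> (forall x y, torsion b A A x y = 0) ->
  forall p q x y, torsion b (A ^+ p) (A ^+ q) x y = 0.
Proof.
move=> b_lie torsionA0; have b_bilin := b_lie.1.
have torsionXA q x y : torsion b (A ^+ q) A x y = 0.
  elim: q x y => [|q IHq] x y; first by rewrite expr0 torsion1l.
  by rewrite exprS torsionMl // IHq torsionA0 mul0mx addr0.
have torsionAX q x y : torsion b A (A ^+ q) x y = 0.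
  by rewrite torsion_swap // ?torsionXA ?oppr0 // -exprS -exprSr.
elim=> [|p IHp] q x y; first by rewrite expr0 torsion1l.
by rewrite exprS torsionMl // IHp torsionAX mul0mx addr0.
Qed.

Lemma deform_lie (b : V -> V -> V) (A : M) :
  is_lie_bracket b -> (forall x y, torsion b A A x y = 0) ->
  is_lie_bracket (deform b (fun x => x *m A)).
Proof.
move=> b_lie torsionA0; have [b_bilin [b_alt b_jacobi]] := b_lie.
split; first exact: deform_bilinear.
split=> [x | x y z].
  by rewrite /deform b_alt mul0mx subr0 (lie_skew b_lie x) subrr.
have jacobiator0 u v w : jacobiator b u v w = 0 by exact: b_jacobi.
apply: eq_trans (jacobiator_deform b_bilin A x y z) _.
by rewrite !jacobiator0 !torsionA0 !(bilin0r b_bilin) !addr0 !mul0mx ?(addr0, subr0).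
Qed.

Lemma lie_mulmx (nu : V -> V -> V) (P : M) : is_lie_bracket nu ->
  (forall u v, nu (u *m P) v = nu u v *m P) ->
  (forall u v, nu u (v *m P) = nu u v *m P) ->
  is_lie_bracket (fun u v => nu u v *m P).
Proof.
move=> [[nu_linl nu_linr] [nu_alt nu_jacobi]] nuPl nuPr.
split; [split|split] => [s x y z|s x y z|x|x y z] /=.
- by rewrite nu_linl mulmxDl scalemxAl.
- by rewrite nu_linr mulmxDl scalemxAl.
- by rewrite nu_alt mul0mx.
- by rewrite !nuPr -!mulmxDl nu_jacobi !mul0mx.
Qed.

Definition tr_equivariant (dl : V -> V -> V -> R) (A : M) : Prop :=
  forall w u v, dl w u (v *m A^T) = dl (w *m A) u v.

Definition cochain_mul (dl : V -> V -> V -> R) (A : M) : V -> V -> V -> R :=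
  fun w => dl (w *m A).

Lemma cochain_mulM (dl : V -> V -> V -> R) (A B : M) :
  cochain_mul (cochain_mul dl A) B = cochain_mul dl (B * A).
Proof. by apply/funext => w; rewrite /cochain_mul -mulmxE mulmxA. Qed.

Lemma cochain_mul1 (dl : V -> V -> V -> R) : cochain_mul dl 1 = dl.
Proof. by apply/funext => w; rewrite /cochain_mul mulmx1. Qed.

Section Cochain.
Variable dl : V -> V -> V -> R.
Hypothesis dl_cochain : is_cochain dl.
Let dl_lin1 u v : forall a x y, (dl^~ u)^~ v (a *: x + y) = a * dl x u v + dl y u v :=
  fun a x y => dl_cochain.2 a x y u v.
Let dl_lin2 w v : forall a x y, (dl w)^~ v (a *: x + y) = a * dl w x v + dl w y v :=
  fun a x y => (dl_cochain.1 w).1 a x y v.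
Let dl_lin3 w u : forall a x y, dl w u (a *: x + y) = a * dl w u x + dl w u y :=
  fun a x y => (dl_cochain.1 w).2.1 a x y u.

Lemma cochainD1 x y u v : dl (x + y) u v = dl x u v + dl y u v.
Proof. exact: (slinD (dl_lin1 u v)). Qed.
Lemma cochainB1 x y u v : dl (x - y) u v = dl x u v - dl y u v.
Proof. exact: (slinB (dl_lin1 u v)). Qed.
Lemma cochainN1 x u v : dl (- x) u v = - dl x u v.
Proof. exact: (slinN (dl_lin1 u v)). Qed.
Lemma cochainD2 w x y v : dl w (x + y) v = dl w x v + dl w y v.
Proof. exact: (slinD (dl_lin2 w v)). Qed.
Lemma cochainB2 w x y v : dl w (x - y) v = dl w x v - dl w y v.
Proof. exact: (slinB (dl_lin2 w v)). Qed.
Lemma cochainN2 w x v : dl w (- x) v = - dl w x v.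
Proof. exact: (slinN (dl_lin2 w v)). Qed.
Lemma cochainD3 w u x y : dl w u (x + y) = dl w u x + dl w u y.
Proof. exact: (slinD (dl_lin3 w u)). Qed.
Lemma cochainB3 w u x y : dl w u (x - y) = dl w u x - dl w u y.
Proof. exact: (slinB (dl_lin3 w u)). Qed.
Lemma cochainN3 w u x : dl w u (- x) = - dl w u x.
Proof. exact: (slinN (dl_lin3 w u)). Qed.
Lemma cochain_skew w u v : dl w u v = - dl w v u.
Proof. exact: (dl_cochain.1 w).2.2. Qed.

Lemma pair_dualbr u v x : pair (dualbr dl u v) x = dl x u v.
Proof.
rewrite {2}(row_sum_delta x) (slin_sum (dl_lin1 u v)).
by apply: eq_bigr => k _; rewrite mxE mulrC.
Qed.

Lemma cochain_mul_cochain (A : M) : is_cochain (cochain_mul dl A).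
Proof.
split=> [w|s x y u v]; first exact: dl_cochain.1.
by rewrite /cochain_mul mulmxDl -scalemxAl dl_cochain.2.
Qed.

Lemma dualbr_cochain_mul (A : M) u v :
  dualbr (cochain_mul dl A) u v = dualbr dl u v *m A^T.
Proof. by apply/rowP => k; rewrite mulmx_entry pair_dualbr trmxK mxE. Qed.

Section Equivariant.
Variable A : M.
Hypothesis dl_equiv : tr_equivariant dl A.

Lemma tr_equivariant_l w u v : dl w (u *m A^T) v = dl (w *m A) u v.
Proof. by rewrite cochain_skew dl_equiv -cochain_skew. Qed.

Lemma dualbr_mulmxl u v : dualbr dl (u *m A^T) v = dualbr dl u v *m A^T.
Proof.
by apply/rowP => k; rewrite mulmx_entry pair_dualbr mxE tr_equivariant_l trmxK.
Qed.

Lemma dualbr_mulmxr u v : dualbr dl u (v *m A^T) = dualbr dl u v *m A^T.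
Proof. by apply/rowP => k; rewrite mulmx_entry pair_dualbr mxE dl_equiv trmxK. Qed.

Lemma deform_dualbr :
  deform (dualbr dl) (fun e => e *m A^T) = fun u v => dualbr dl u v *m A^T.
Proof.
by apply/funext => u; apply/funext => v; rewrite /deform dualbr_mulmxl dualbr_mulmxr addrK.
Qed.

Lemma tr_equivariantX k : tr_equivariant dl (A ^+ k).
Proof.
elim: k => [|k IHk] w u v; first by rewrite expr0 trmx1 !mulmx1.
by rewrite exprSr -mulmxE trmx_mul !mulmxA IHk dl_equiv.
Qed.

Lemma tr_equivariant_cochain_mul (B : M) :
  A * B = B * A -> tr_equivariant (cochain_mul dl B) A.
Proof. by move=> AB w u v; rewrite /cochain_mul dl_equiv -!mulmxA !mulmxE AB. Qed.

End Equivariant.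
End Cochain.

(* The Chevalley–Eilenberg differential of [dl] for the bracket [b], evaluated
   at [x, y] and [a, c]: [cocycle (adstar b) b dl] is
   [forall x y a c, ce_diff b dl x y a c = 0] by conversion. *)
Definition ce_diff (b : V -> V -> V) (dl : V -> V -> V -> R) (x y a c : V) : R :=
  Defs.iota (adstar b x) (dl y) a c - Defs.iota (adstar b y) (dl x) a c
  - dl (b x y) a c.

Local Notation is_cocycle b dl := (cocycle (adstar b) b dl).

(* The commutator [[ᵗA, ad^*_x]]; the paper's [A^i_x] is
   [adstar_comm b (n^i) x + ad^*_{n^i x}]. *)
Definition adstar_comm (b : V -> V -> V) (A : M) (x e : V) : V :=
  adstar b x e *m A^T - adstar b x (e *m A^T).

Lemma adstar_deform (b : V -> V -> V) (A : M) : is_bilinear b -> forall x e,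
  adstar (deform b (fun x => x *m A)) x e = adstar_comm b A x e + adstar b (x *m A) e.
Proof.
move=> b_bilin x e; apply/rowP => k.
rewrite /adstar_comm !(entryD, entryN) mulmx_entry trmxK !mxE.
rewrite !pair_adstar // pair_trmx /deform (slinB (pair_linr e)) (slinD (pair_linr e)).
ring.
Qed.

Section CocycleDeform.
Variables (b : V -> V -> V) (dl : V -> V -> V -> R) (A : M).
Hypotheses (b_bilin : is_bilinear b) (dl_cochain : is_cochain dl).
Hypothesis dl_equiv : tr_equivariant dl A.

Let dl_equiv_l := tr_equivariant_l dl_cochain dl_equiv.

Ltac cochain_expand := rewrite ?(cochainD1 dl_cochain, cochainB1 dl_cochain,
  cochainN1 dl_cochain, cochainD2 dl_cochain, cochainB2 dl_cochain,
  cochainN2 dl_cochain, cochainD3 dl_cochain, cochainB3 dl_cochain,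
  cochainN3 dl_cochain).

Lemma ce_diff_deform x y a c :
  ce_diff (deform b (fun x => x *m A)) dl x y a c =
    ce_diff b dl (x *m A) y a c + ce_diff b dl x (y *m A) a c
  - ce_diff b dl x y (a *m A^T) c - ce_diff b dl x y a (c *m A^T)
  + ce_diff b (cochain_mul dl A) x y a c.
Proof.
rewrite /ce_diff /Defs.iota !adstar_deform // /adstar_comm /deform /cochain_mul.
by cochain_expand; rewrite ?(dl_equiv, dl_equiv_l); lra.
Qed.

Lemma ce_diff_mul x y a c :
  ce_diff b (cochain_mul dl A) x y a c =
    ce_diff b dl x y (a *m A^T) c
  + dl y (adstar_comm b A x a) c - dl x (adstar_comm b A y a) c.
Proof.
rewrite /ce_diff /Defs.iota /adstar_comm /cochain_mul.
by cochain_expand; rewrite ?(dl_equiv, dl_equiv_l); lra.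
Qed.

Lemma adstar_comm_mulmx : (forall x y, torsion b A A x y = 0) ->
  forall x e, adstar_comm b A (x *m A) e = adstar_comm b A x (e *m A^T).
Proof.
move=> torsionA0 x e; apply/rowP => k.
have := congr1 (pair e) (torsionA0 x (ev k)).
rewrite /adstar_comm !(entryD, entryN) !mulmx_entry !trmxK !mxE.
rewrite !pair_adstar // !pair_trmx /torsion.
rewrite !(slinB (pair_linr e), slinD (pair_linr e), slinN (pair_linr e)).
rewrite (slin0 (pair_linr e)).
lra.
Qed.

Lemma cocycle_deform : is_cocycle b dl -> is_cocycle b (cochain_mul dl A) ->
  is_cocycle (deform b (fun x => x *m A)) dl.
Proof.
move=> dl_cocycle dlA_cocycle x y a c.
have dl_ce0 x' y' a' c' : ce_diff b dl x' y' a' c' = 0 by exact: dl_cocycle.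
have dlA_ce0 x' y' a' c' : ce_diff b (cochain_mul dl A) x' y' a' c' = 0.
  exact: dlA_cocycle.
by apply: eq_trans (ce_diff_deform x y a c) _; rewrite !dl_ce0 dlA_ce0 ?(addr0, subr0).
Qed.

Lemma cocycle_mul_of_deform : is_cocycle b dl ->
  is_cocycle (deform b (fun x => x *m A)) dl -> is_cocycle b (cochain_mul dl A).
Proof.
move=> dl_cocycle deform_cocycle x y a c.
have dl_ce0 x' y' a' c' : ce_diff b dl x' y' a' c' = 0 by exact: dl_cocycle.
have : ce_diff (deform b (fun x => x *m A)) dl x y a c = 0 by exact: deform_cocycle.
by rewrite ce_diff_deform !dl_ce0 ?(add0r, subr0).
Qed.

End CocycleDeform.

Lemma cocycle_mul_sqr (b : V -> V -> V) (dl : V -> V -> V -> R) (A : M) :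
  is_bilinear b -> is_cochain dl -> tr_equivariant dl A ->
  (forall x y, torsion b A A x y = 0) ->
  is_cocycle b dl -> is_cocycle b (cochain_mul dl A) ->
  is_cocycle b (cochain_mul (cochain_mul dl A) A).
Proof.
move=> b_bilin dl_cochain dl_equiv torsionA0 dl_cocycle dlA_cocycle.
have dl_ce0 x y a c : ce_diff b dl x y a c = 0 by exact: dl_cocycle.
have dlA_ce0 x y a c : ce_diff b (cochain_mul dl A) x y a c = 0.
  exact: dlA_cocycle.
(* By [ce_diff_mul], the defect of [dl ∘ A ∘ A] is a difference of two values
   of [S]; symmetry of [S] and the torsion identity [S_mulmx] swap them. *)
pose S x y a c := dl y (adstar_comm b A x a) c.
have S_sym x y a c : S x y a c = S y x a c.
  have := ce_diff_mul b dl_cochain dl_equiv x y a c.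
  by rewrite dlA_ce0 dl_ce0 add0r => /eqP; rewrite eq_sym subr_eq0 => /eqP.
have S_mulmx u w a c : S (u *m A) w a c = S u w (a *m A^T) c.
  by rewrite /S adstar_comm_mulmx.
have dlA_equiv := tr_equivariant_cochain_mul dl_equiv (erefl (A * A)).
move=> x y a c.
apply: eq_trans (ce_diff_mul b (cochain_mul_cochain dl_cochain A) dlA_equiv x y a c) _.
rewrite dlA_ce0 add0r /cochain_mul -/(S x (y *m A) a c) -/(S y (x *m A) a c).
by apply/eqP; rewrite subr_eq0 S_sym S_mulmx S_sym -S_mulmx S_sym.
Qed.

Lemma cocycle_mulX (b : V -> V -> V) (dl : V -> V -> V -> R) (A : M) :
  is_bilinear b -> is_cochain dl -> tr_equivariant dl A ->
  (forall x y, torsion b A A x y = 0) ->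
  is_cocycle b dl -> is_cocycle b (cochain_mul dl A) ->
  forall m, is_cocycle b (cochain_mul dl (A ^+ m)).
Proof.
move=> b_bilin dl_cochain dl_equiv torsionA0 dl_cocycle dlA_cocycle.
suff cocycle2 m : is_cocycle b (cochain_mul dl (A ^+ m)) /\
                  is_cocycle b (cochain_mul dl (A ^+ m.+1)).
  by move=> m; case: (cocycle2 m).
elim: m => [|m [IHm IHm1]]; first by rewrite expr0 expr1 cochain_mul1.
split=> //; rewrite !exprS -!cochain_mulM.
apply: cocycle_mul_sqr => //; last by rewrite cochain_mulM -exprS.
- exact: cochain_mul_cochain.
- by apply: tr_equivariant_cochain_mul => //; rewrite -exprS -exprSr.
Qed.

Lemma nijenhuis_torsion (b : V -> V -> V) (N : M) :
  is_bilinear b -> is_nijenhuis b N -> forall x y, torsion b N N x y = 0.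
Proof.
move=> b_bilin N_nij x y; have := N_nij x y.
by rewrite /nmap /deform /torsion expr1 => <-; rewrite mulmxBl mulmxDl; entrywise; ring.
Qed.

Lemma Amap_adstar_deform (b : V -> V -> V) (N : M) i :
  is_bilinear b -> Amap b N i = adstar (deform b (nmap N i)).
Proof.
move=> b_bilin; apply/funext => x; apply/funext => e.
by rewrite /Amap /tnmap /nmap adstar_deform // /adstar_comm trmxX.
Qed.

Lemma tnmapE (N : M) j : tnmap N j = fun e => e *m (N ^+ j)^T.
Proof. by apply/funext => e; rewrite /tnmap trmxX. Qed.

Lemma delta_tn_mul (dl : V -> V -> V -> R) (N : M) j :
  is_cochain dl -> tr_equivariant dl N -> delta_tn dl N j = cochain_mul dl (N ^+ j).
Proof.
move=> dl_cochain dl_equiv; have dl_equivX := tr_equivariantX dl_equiv j.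
apply/funext => w; apply/funext => u; apply/funext => v.
rewrite /delta_tn /Defs.iota /tnmap /nmap /cochain_mul -trmxX dl_equivX.
by rewrite (tr_equivariant_l dl_cochain dl_equivX) addrK.
Qed.

Section AlmostNL.
Variables (br : V -> V -> V) (dl : V -> V -> V -> R) (N : M).
Hypotheses (NL : is_almost_NL br dl N) (N_nij : is_nijenhuis br N).
Hypothesis dl_equiv : tr_equivariant dl N.

Let br_lie : is_lie_bracket br := NL.1.1.
Let br_bilin : is_bilinear br := NL.1.1.1.
Let dl_cochain : is_cochain dl := NL.1.2.1.
Let dualbr_lie : is_lie_bracket (dualbr dl) := NL.1.2.2.2.

Lemma torsion_nmap p q x y : torsion br (N ^+ p) (N ^+ q) x y = 0.
Proof. exact: torsionX br_lie (nijenhuis_torsion br_bilin N_nij) p q x y. Qed.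

Lemma deform_nmap_lie i : is_lie_bracket (deform br (nmap N i)).
Proof. exact: deform_lie br_lie (torsion_nmap i i). Qed.

Lemma deform_nmap_compat i i' (a c : R) :
  is_lie_bracket (fun x y => a *: deform br (nmap N i) x y
                             + c *: deform br (nmap N i') x y).
Proof.
have -> : (fun x y => a *: deform br (nmap N i) x y + c *: deform br (nmap N i') x y)
          = deform br (fun x => x *m (a *: N ^+ i + c *: N ^+ i')).
  apply/funext => x; apply/funext => y.
  rewrite /deform /nmap !mulmxDr -!scalemxAr; bilin_expand br_bilin.
  by rewrite ?(bilinZl br_bilin, bilinZr br_bilin) -?scalemxAl; entrywise; ring.
apply: deform_lie br_lie _ => x y.
rewrite (torsion_lincombl br_bilin) !(torsion_lincombr br_bilin) !torsion_nmap.
by rewrite ?(scaler0, addr0).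
Qed.

Lemma dualbr_mulmx_lie j : is_lie_bracket (fun u v => dualbr dl u v *m (N ^+ j)^T).
Proof.
have dl_equivX := tr_equivariantX dl_equiv j.
exact: lie_mulmx dualbr_lie (dualbr_mulmxl dl_cochain dl_equivX)
                            (dualbr_mulmxr dl_cochain dl_equivX).
Qed.

Lemma deform_tnmap j :
  deform (dualbr dl) (tnmap N j) = fun u v => dualbr dl u v *m (N ^+ j)^T.
Proof. by rewrite tnmapE (deform_dualbr dl_cochain (tr_equivariantX dl_equiv j)). Qed.

Lemma deform_tnmap_compat j j' (a c : R) :
  is_lie_bracket (fun u v => a *: deform (dualbr dl) (tnmap N j) u v
                             + c *: deform (dualbr dl) (tnmap N j') u v).
Proof.
have -> : (fun u v => a *: deform (dualbr dl) (tnmap N j) u v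
                      + c *: deform (dualbr dl) (tnmap N j') u v)
          = fun u v => dualbr dl u v *m (a *: (N ^+ j)^T + c *: (N ^+ j')^T).
  by apply/funext => u; apply/funext => v; rewrite !deform_tnmap mulmxDr -!scalemxAr.
have equivX k := tr_equivariantX dl_equiv k.
have nu_bilin := dualbr_lie.1.
apply: lie_mulmx dualbr_lie _ _ => u v; rewrite !mulmxDr -!scalemxAr.
- by rewrite (bilinDl nu_bilin) !(bilinZl nu_bilin) !(dualbr_mulmxl dl_cochain (equivX _)).
- by rewrite (bilinDr nu_bilin) !(bilinZr nu_bilin) !(dualbr_mulmxr dl_cochain (equivX _)).
Qed.

Lemma cocycle_mul_nmap j : is_cocycle br (cochain_mul dl (N ^+ j)).
Proof.
have dlN_cocycle : is_cocycle br (cochain_mul dl N).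
  apply: cocycle_mul_of_deform br_bilin dl_cochain dl_equiv NL.1.2.2.1 _.
  by have := NL.2.2.1; rewrite Amap_adstar_deform.
exact: cocycle_mulX br_bilin dl_cochain dl_equiv (nijenhuis_torsion br_bilin N_nij)
         NL.1.2.2.1 dlN_cocycle j.
Qed.

Lemma cocycle_deform_nmap i j :
  is_cocycle (deform br (nmap N i)) (cochain_mul dl (N ^+ j)).
Proof.
apply: cocycle_deform => //.
- exact: cochain_mul_cochain.
- apply: tr_equivariant_cochain_mul; first exact: tr_equivariantX.
  by rewrite -!exprD addnC.
- exact: cocycle_mul_nmap.
- by rewrite cochain_mulM -exprD; exact: cocycle_mul_nmap.
Qed.

Lemma deform_hierarchy i j :
  is_lie_bracket (deform br (nmap N i)) /\
  is_lie_bracket (deform (dualbr dl) (tnmap N j)) /\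
  (forall xi e1 e2, pair (deform (dualbr dl) (tnmap N j) e1 e2) xi
                    = delta_tn dl N j xi e1 e2) /\
  cocycle (Amap br N i) (deform br (nmap N i)) (delta_tn dl N j) /\
  is_lie_bialgebra (deform br (nmap N i)) (delta_tn dl N j).
Proof.
rewrite (Amap_adstar_deform _ _ br_bilin) (delta_tn_mul j dl_cochain dl_equiv).
rewrite deform_tnmap.
have dualbr_mul : dualbr (cochain_mul dl (N ^+ j)) = fun u v => dualbr dl u v *m (N ^+ j)^T.
  by apply/funext => u; apply/funext => v; rewrite dualbr_cochain_mul.
split; first exact: deform_nmap_lie.
split; first exact: dualbr_mulmx_lie.
split; first by move=> xi e1 e2; rewrite pair_trmx pair_dualbr.
split; first exact: cocycle_deform_nmap.
split; first exact: deform_nmap_lie.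
split; first exact: cochain_mul_cochain.
split; first exact: cocycle_deform_nmap.
by rewrite dualbr_mul; exact: dualbr_mulmx_lie.
Qed.

End AlmostNL.
End NLBialgebra.

Theorem mainTheorem13 (R : realType) (d : nat) (br : 'rV[R]_d -> 'rV[R]_d -> 'rV[R]_d)
  (dl : 'rV[R]_d -> 'rV[R]_d -> 'rV[R]_d -> R) (N : 'M[R]_d) :
  is_almost_NL br dl N ->
  is_nijenhuis br N ->
  (forall xi e1 e2, dl xi e1 (tnmap N 1 e2) = dl (nmap N 1 xi) e1 e2) ->
  (forall i j : nat,
     is_lie_bracket (deform br (nmap N i)) /\
     is_lie_bracket (deform (dualbr dl) (tnmap N j)) /\
     (forall xi e1 e2, pair (deform (dualbr dl) (tnmap N j) e1 e2) xi
                       = delta_tn dl N j xi e1 e2) /\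
     cocycle (Amap br N i) (deform br (nmap N i)) (delta_tn dl N j) /\
     is_lie_bialgebra (deform br (nmap N i)) (delta_tn dl N j)) /\
  (forall (i i' : nat) (a b : R),
     is_lie_bracket (fun x y => a *: deform br (nmap N i) x y
                                + b *: deform br (nmap N i') x y)) /\
  (forall (j j' : nat) (a b : R),
     is_lie_bracket (fun x y => a *: deform (dualbr dl) (tnmap N j) x y
                                + b *: deform (dualbr dl) (tnmap N j') x y)).
Proof.
move=> NL N_nij dl_equiv1.
have dl_equiv : tr_equivariant dl N.
  by move=> w u v; have := dl_equiv1 w u v; rewrite /tnmap /nmap !expr1.
split; first exact: deform_hierarchy NL N_nij dl_equiv.
split; first exact: deform_nmap_compat NL N_nij.
exact: deform_tnmap_compat NL dl_equiv.
Qed.
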